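(* If a CCCP configuration $\mathcal C$ is well-formed and $\mathcal C\to\mathcal C'$, then $\mathcal C'$ is well-formed.
   Context: CCCP syntax. Fix a set of channels (ranged over by $c,d$) and a set of values containing data variables $x,y$ and a special error value $\mathtt{err}$; closed values $v,w$ contain no variables, and each closed value $v$ has a transmission time $\delta_v\in\mathbb{N}$ with $\delta_v\ge 1$. Expressions $e$ are built from values; closed expressions evaluate to closed values via $[\![e]\!]$. Station code (processes) is given by $P,Q ::= c!\langle e\rangle.P \mid \lfloor ?c(x).P\rfloor Q \mid \sigma.P \mid \tau.P \mid P+Q \mid [b]P,Q \mid X \mid \mathbf{0} \mid \mathrm{fix}\,X.P$, where $b$ is either $e_1=e_2$ or $\mathrm{exp}(c)$, $[b]P,Q$ is a conditional (then-branch $P$, else-branch $Q$), $\lfloor ?c(x).P\rfloor Q$ is a receiver on $c$ with timeout branch $Q$ ($x$ bound in $P$), $\sigma.P$ is a one-unit delay and $\sigma^n.P$ denotes $n$ nested delays. System terms are $W ::= P \mid \lfloor ?c(x).P\rfloor \mid W_1|W_2 \mid \nu c{:}(n,v).W$, where $\lfloor ?c(x).P\rfloor$ is an active receiver ($x$ bound in $P$) and $\nu c{:}(n,v).W$ restricts $c$ with local channel state $(n,v)$. In $\mathrm{fix}\,X.P$ every occurrence of $X$ in $P$ is guarded, i.e. lies within a broadcast prefix, a receiver continuation, a timeout branch, a $\sigma$-prefix, or a branch of a conditional. Terms are identified up to $\alpha$-conversion. A channel environment is a map $\Gamma$ from channels to $\mathbb{N}\times$(closed values); write $\Gamma\vdash_t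 c:n$ and $\Gamma\vdash_v c:w$ when $\Gamma(c)=(n,w)$; $c$ is idle in $\Gamma$ if $\Gamma\vdash_t c:0$ and exposed otherwise; $\Gamma[c\mapsto(n,v)]$ is $\Gamma$ updated at $c$; $\Gamma\le\Gamma'$ iff for every $c$, $\Gamma\vdash_t c:n$ and $\Gamma'\vdash_t c:m$ imply $n\le m$. A configuration $\Gamma\triangleright W$ is a channel environment together with a closed system term (no free data or process variables). Intensional semantics. Actions $\lambda$ are $c!v$, $c?v$, $\sigma$, $\tau$. The environment update $\lambda(\Gamma)$ is: $\sigma(\Gamma)(c)=(\max(n-1,0),w)$ whenever $\Gamma(c)=(n,w)$; $c!v(\Gamma)$ agrees with $\Gamma$ except at $c$, where it is $(\delta_v,v)$ if $c$ is idle in $\Gamma$ and $(\max(\delta_v,n),\mathtt{err})$ if $\Gamma\vdash_t c:n>0$; $c?v(\Gamma)=c!v(\Gamma)$; $\tau(\Gamma)=\Gamma$. The predicate $\mathrm{rcv}(W,c)$ on terms is: true for $\lfloor ?d(x).P\rfloor Q$ iff $d=c$; $\mathrm{rcv}(P+Q,c)=\mathrm{rcv}(P,c)\vee\mathrm{rcv}(Q,c)$; $\mathrm{rcv}(\mathrm{fix}\,X.P,c)=\mathrm{rcv}(P,c)$; $\mathrm{rcv}(W_1|W_2,c)=\mathrm{rcv}(W_1,c)\vee\mathrm{rcv}(W_2,c)$; $\mathrm{rcv}(\nu d{:}(n,v).W,c)=\mathrm{rcv}(W,c)$ (with $d\neq c$ by $\alpha$-conversion); false for all other forms (broadcasts,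 $\tau.P$, $\sigma.P$, conditionals, $X$, $\mathbf 0$, active receivers). Then $\mathrm{rcv}(\Gamma\triangleright W,c)$ holds iff $c$ is idle in $\Gamma$ and $\mathrm{rcv}(W,c)$. Transitions $\Gamma\triangleright W\xrightarrow{\lambda}W'$ are the least relation closed under: (Snd) $[\![e]\!]=v$ implies $\Gamma\triangleright c!\langle e\rangle.P\xrightarrow{c!v}\sigma^{\delta_v}.P$; (Rcv) $c$ idle in $\Gamma$ implies $\Gamma\triangleright\lfloor ?c(x).P\rfloor Q\xrightarrow{c?v}\lfloor ?c(x).P\rfloor$; (RcvIgn) $\neg\mathrm{rcv}(\Gamma\triangleright W,c)$ implies $\Gamma\triangleright W\xrightarrow{c?v}W$; (Sync) $\Gamma\triangleright W_1\xrightarrow{c!v}W_1'$ and $\Gamma\triangleright W_2\xrightarrow{c?v}W_2'$ imply $\Gamma\triangleright W_1|W_2\xrightarrow{c!v}W_1'|W_2'$, and symmetrically; (RcvPar) $\Gamma\triangleright W_i\xrightarrow{c?v}W_i'$ for $i=1,2$ imply $\Gamma\triangleright W_1|W_2\xrightarrow{c?v}W_1'|W_2'$; (TimeNil) $\Gamma\triangleright\mathbf 0\xrightarrow{\sigma}\mathbf 0$; (Sleep) $\Gamma\triangleright\sigma.P\xrightarrow{\sigma}P$; (ActRcv) $\Gamma\vdash_t c:n$, $n>1$ imply $\Gamma\triangleright\lfloor ?c(x).P\rfloor\xrightarrow{\sigma}\lfloor ?c(x).P\rfloor$; (EndRcv) $\Gamma\vdash_t c:1$, $\Gamma\vdash_v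 c:w$ imply $\Gamma\triangleright\lfloor ?c(x).P\rfloor\xrightarrow{\sigma}\{w/x\}P$; (Timeout) $c$ idle in $\Gamma$ implies $\Gamma\triangleright\lfloor ?c(x).P\rfloor Q\xrightarrow{\sigma}Q$; (RcvLate) $c$ exposed in $\Gamma$ implies $\Gamma\triangleright\lfloor ?c(x).P\rfloor Q\xrightarrow{\tau}\lfloor ?c(x).\{\mathtt{err}/x\}P\rfloor$; (Tau) $\Gamma\triangleright\tau.P\xrightarrow{\tau}P$; (Then)/(Else) $\Gamma\triangleright[b]P,Q\xrightarrow{\tau}\sigma.P$ if $[\![b]\!]_\Gamma$ is true and $\xrightarrow{\tau}\sigma.Q$ otherwise, where $[\![e_1=e_2]\!]_\Gamma$ is true iff $[\![e_1]\!]=[\![e_2]\!]$ and $[\![\mathrm{exp}(c)]\!]_\Gamma$ is true iff $c$ is exposed in $\Gamma$; (TimePar) $\Gamma\triangleright W_i\xrightarrow{\sigma}W_i'$ for $i=1,2$ imply $\Gamma\triangleright W_1|W_2\xrightarrow{\sigma}W_1'|W_2'$; (TauPar) $\Gamma\triangleright W_1\xrightarrow{\tau}W_1'$ implies $\Gamma\triangleright W_1|W_2\xrightarrow{\tau}W_1'|W_2$, and symmetrically; (Rec) $\Gamma\triangleright\{\mathrm{fix}\,X.P/X\}P\xrightarrow{\lambda}W$ implies $\Gamma\triangleright\mathrm{fix}\,X.P\xrightarrow{\lambda}W$; (Sum) for $\lambda\in\{\tau,c!v\}$, $\Gamma\triangleright P\xrightarrow{\lambda}W$ implies $\Gamma\triangleright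 P+Q\xrightarrow{\lambda}W$, and symmetrically; (SumTime) $\Gamma\triangleright P\xrightarrow{\sigma}P'$, $\Gamma\triangleright Q\xrightarrow{\sigma}Q'$ imply $\Gamma\triangleright P+Q\xrightarrow{\sigma}P'+Q'$; (SumRcv) $\Gamma\triangleright P\xrightarrow{c?v}W$ and $\mathrm{rcv}(\Gamma\triangleright P,c)$ imply $\Gamma\triangleright P+Q\xrightarrow{c?v}W$, and symmetrically; (ResI) $\Gamma[c\mapsto(n,v)]\triangleright W\xrightarrow{c!w}W'$ implies $\Gamma\triangleright\nu c{:}(n,v).W\xrightarrow{\tau}\nu c{:}(c!w(\Gamma[c\mapsto(n,v)]))(c).W'$; (ResV) $\Gamma[c\mapsto(n,v)]\triangleright W\xrightarrow{\lambda}W'$ with $c$ not occurring in $\lambda$ implies $\Gamma\triangleright\nu c{:}(n,v).W\xrightarrow{\lambda}\nu c{:}(\lambda(\Gamma[c\mapsto(n,v)]))(c).W'$. Reductions. $\Gamma\triangleright W\to\Gamma'\triangleright W'$ iff $\Gamma\triangleright W\xrightarrow{\lambda}W'$ for some $\lambda\in\{c!v,\sigma,\tau\}$ and $\Gamma'=\lambda(\Gamma)$; it is instantaneous ($\to_i$) if $\lambda\neq\sigma$ and timed ($\to_\sigma$) if $\lambda=\sigma$. Well-formedness. The set of well-formed configurations is the least set such that: $\Gamma\triangleright P$ is well-formed for every closed process $P$; $\Gamma\triangleright\lfloor ?c(x).P\rfloor$ is well-formed whenever $c$ is exposed in $\Gamma$; $\Gamma\triangleright W_1|W_2$ is well-formed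 whenever $\Gamma\triangleright W_1$ and $\Gamma\triangleright W_2$ are; $\Gamma\triangleright\nu c{:}(n,v).W$ is well-formed whenever $\Gamma[c\mapsto(n,v)]\triangleright W$ is. *)

(* Binders are represented with de Bruijn indices (this realises
   "terms are identified up to alpha-conversion"):
   - data variables x : index bound by receivers  ⌊?c(x).P⌋ ;
   - process variables X : index bound by fix ;
   - channels : free channels are natural numbers; nu c:(n,v).W binds
     channel index 0 inside W, and channel k+1 inside W denotes the
     outer channel k. *)
From Stdlib Require Import Arith List.
Set Implicit Arguments.

Section CCCP.
Variable D : Type.   (* the (arbitrary) set of basic closed data values *)

Inductive cval : Type := CErr | CData (d : D).

Inductive val : Type := VVar (x : nat) | VC (v : cval).

Inductive exp : Type :=
| EV (v : val)
| EOp (f : list cval -> cval) (es : list exp).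

Inductive bexp : Type :=
| BEq (e1 e2 : exp)
| BExp (c : nat).

Inductive proc : Type :=
| PSnd (c : nat) (e : exp) (P : proc)
| PRcv (c : nat) (P Q : proc)           (* ⌊?c(x).P⌋Q, x (index 0) bound in P *)
| PSig (P : proc)
| PTau (P : proc)
| PSum (P Q : proc)
| PIf (b : bexp) (P Q : proc)
| PVar (X : nat)
| PNil
| PFix (P : proc).                      (* fix X.P, X (index 0) bound in P *)

Inductive sys : Type :=
| SProc (P : proc)
| SAct (c : nat) (P : proc)
| SPar (W1 W2 : sys)
| SRes (n : nat) (v : cval) (W : sys).  (* nu c:(n,v).W, c = index 0 in W *)

Definition env := nat -> nat * cval.

Definition env_ext (a : nat * cval) (G : env) : env :=
  fun c => match c with 0 => a | S c' => G c' end.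

Definition idle (G : env) (c : nat) : Prop := fst (G c) = 0.
Definition exposed (G : env) (c : nat) : Prop := 0 < fst (G c).

Definition closed_val (dd : nat) (v : val) : Prop :=
  match v with VVar x => x < dd | VC _ => True end.

Fixpoint closed_exp (dd : nat) (e : exp) : Prop :=
  match e with
  | EV v => closed_val dd v
  | EOp _ es =>
      (fix all (l : list exp) : Prop :=
         match l with nil => True | e :: l => closed_exp dd e /\ all l end) es
  end.

Definition closed_bexp (dd : nat) (b : bexp) : Prop :=
  match b with BEq e1 e2 => closed_exp dd e1 /\ closed_exp dd e2 | BExp _ => True end.

(* dd = number of enclosing data binders, pd = number of enclosing fix *)
Fixpoint closed_proc (dd pd : nat) (P : proc) : Prop :=
  match P with
  | PSnd _ e P => closed_exp dd e /\ closed_proc dd pd P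
  | PRcv _ P Q => closed_proc (S dd) pd P /\ closed_proc dd pd Q
  | PSig P => closed_proc dd pd P
  | PTau P => closed_proc dd pd P
  | PSum P Q => closed_proc dd pd P /\ closed_proc dd pd Q
  | PIf b P Q => closed_bexp dd b /\ closed_proc dd pd P /\ closed_proc dd pd Q
  | PVar X => X < pd
  | PNil => True
  | PFix P => closed_proc dd (S pd) P
  end.

Definition dsubst_val (k : nat) (w : cval) (v : val) : val :=
  match v with
  | VVar x => if Nat.eqb x k then VC w else if Nat.ltb k x then VVar (pred x) else VVar x
  | VC u => VC u
  end.

Fixpoint dsubst_exp (k : nat) (w : cval) (e : exp) : exp :=
  match e with
  | EV v => EV (dsubst_val k w v)
  | EOp f es =>
      EOp f ((fix go (l : list exp) : list exp :=
                match l with nil => nil | e :: l => dsubst_exp k w e :: go l end) es)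
  end.

Definition dsubst_bexp (k : nat) (w : cval) (b : bexp) : bexp :=
  match b with
  | BEq e1 e2 => BEq (dsubst_exp k w e1) (dsubst_exp k w e2)
  | BExp c => BExp c
  end.

Fixpoint dsubst (k : nat) (w : cval) (P : proc) : proc :=
  match P with
  | PSnd c e P => PSnd c (dsubst_exp k w e) (dsubst k w P)
  | PRcv c P Q => PRcv c (dsubst (S k) w P) (dsubst k w Q)
  | PSig P => PSig (dsubst k w P)
  | PTau P => PTau (dsubst k w P)
  | PSum P Q => PSum (dsubst k w P) (dsubst k w Q)
  | PIf b P Q => PIf (dsubst_bexp k w b) (dsubst k w P) (dsubst k w Q)
  | PVar X => PVar X
  | PNil => PNil
  | PFix P => PFix (dsubst k w P)
  end.

(* {R/X}P for a closed process R, X = process index k *)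
Fixpoint psubst (k : nat) (R : proc) (P : proc) : proc :=
  match P with
  | PSnd c e P => PSnd c e (psubst k R P)
  | PRcv c P Q => PRcv c (psubst k R P) (psubst k R Q)
  | PSig P => PSig (psubst k R P)
  | PTau P => PTau (psubst k R P)
  | PSum P Q => PSum (psubst k R P) (psubst k R Q)
  | PIf b P Q => PIf b (psubst k R P) (psubst k R Q)
  | PVar X => if Nat.eqb X k then R else if Nat.ltb k X then PVar (pred X) else PVar X
  | PNil => PNil
  | PFix P => PFix (psubst (S k) R P)
  end.

Definition sigma_n (n : nat) (P : proc) : proc := Nat.iter n PSig P.

Fixpoint olist (l : list (option cval)) : option (list cval) :=
  match l with
  | nil => Some nil
  | None :: _ => None
  | Some v :: l => match olist l with Some l' => Some (v :: l') | None => None end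
  end.

(* [[e]] : defined (Some) exactly on closed expressions *)
Fixpoint eval (e : exp) : option cval :=
  match e with
  | EV (VC v) => Some v
  | EV (VVar _) => None
  | EOp f es =>
      match olist ((fix go (l : list exp) : list (option cval) :=
                      match l with nil => nil | e :: l => eval e :: go l end) es) with
      | Some vs => Some (f vs)
      | None => None
      end
  end.

Definition beval (G : env) (b : bexp) : Prop :=
  match b with
  | BEq e1 e2 => eval e1 = eval e2
  | BExp c => exposed G c
  end.

Inductive act : Type :=
| ASnd (c : nat) (v : cval)
| ARcv (c : nat) (v : cval)
| ASig
| ATau.

(* shift the channel of an outer action under one nu binder *)
Definition shift_act (l : act) : act :=
  match l with
  | ASnd c v => ASnd (S c) v
  | ARcv c v => ARcv (S c) v
  | ASig => ASig
  | ATau => ATau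
  end.

Variable delta : cval -> nat.   (* transmission times *)

Definition bcast_upd (c : nat) (v : cval) (G : env) : env :=
  fun d => if Nat.eqb d c then
             (if Nat.eqb (fst (G c)) 0 then (delta v, v)
              else (Nat.max (delta v) (fst (G c)), CErr))
           else G d.

Definition upd (l : act) (G : env) : env :=
  match l with
  | ASig => fun c => (fst (G c) - 1, snd (G c))
  | ASnd c v => bcast_upd c v G
  | ARcv c v => bcast_upd c v G
  | ATau => G
  end.

Fixpoint rcv_proc (P : proc) (c : nat) : Prop :=
  match P with
  | PRcv d _ _ => d = c
  | PSum P Q => rcv_proc P c \/ rcv_proc Q c
  | PFix P => rcv_proc P c
  | _ => False
  end.

Fixpoint rcv_sys (W : sys) (c : nat) : Prop :=
  match W with
  | SProc P => rcv_proc P c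
  | SAct _ _ => False
  | SPar W1 W2 => rcv_sys W1 c \/ rcv_sys W2 c
  | SRes _ _ W => rcv_sys W (S c)
  end.

Definition rcv_conf (G : env) (W : sys) (c : nat) : Prop := idle G c /\ rcv_sys W c.

Inductive trans : env -> sys -> act -> sys -> Prop :=
| TSnd G c e P v :
    eval e = Some v ->
    trans G (SProc (PSnd c e P)) (ASnd c v) (SProc (sigma_n (delta v) P))
| TRcv G c P Q v :
    idle G c ->
    trans G (SProc (PRcv c P Q)) (ARcv c v) (SAct c P)
| TRcvIgn G W c v :
    ~ rcv_conf G W c ->
    trans G W (ARcv c v) W
| TSyncL G W1 W2 W1' W2' c v :
    trans G W1 (ASnd c v) W1' -> trans G W2 (ARcv c v) W2' ->
    trans G (SPar W1 W2) (ASnd c v) (SPar W1' W2')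
| TSyncR G W1 W2 W1' W2' c v :
    trans G W1 (ARcv c v) W1' -> trans G W2 (ASnd c v) W2' ->
    trans G (SPar W1 W2) (ASnd c v) (SPar W1' W2')
| TRcvPar G W1 W2 W1' W2' c v :
    trans G W1 (ARcv c v) W1' -> trans G W2 (ARcv c v) W2' ->
    trans G (SPar W1 W2) (ARcv c v) (SPar W1' W2')
| TTimeNil G :
    trans G (SProc PNil) ASig (SProc PNil)
| TSleep G P :
    trans G (SProc (PSig P)) ASig (SProc P)
| TActRcv G c P :
    1 < fst (G c) ->
    trans G (SAct c P) ASig (SAct c P)
| TEndRcv G c P :
    fst (G c) = 1 ->
    trans G (SAct c P) ASig (SProc (dsubst 0 (snd (G c)) P))
| TTimeout G c P Q :
    idle G c ->
    trans G (SProc (PRcv c P Q)) ASig (SProc Q)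
| TRcvLate G c P Q :
    exposed G c ->
    trans G (SProc (PRcv c P Q)) ATau (SAct c (dsubst 0 CErr P))
| TTau G P :
    trans G (SProc (PTau P)) ATau (SProc P)
| TThen G b P Q :
    beval G b ->
    trans G (SProc (PIf b P Q)) ATau (SProc (PSig P))
| TElse G b P Q :
    ~ beval G b ->
    trans G (SProc (PIf b P Q)) ATau (SProc (PSig Q))
| TTimePar G W1 W2 W1' W2' :
    trans G W1 ASig W1' -> trans G W2 ASig W2' ->
    trans G (SPar W1 W2) ASig (SPar W1' W2')
| TTauParL G W1 W2 W1' :
    trans G W1 ATau W1' ->
    trans G (SPar W1 W2) ATau (SPar W1' W2)
| TTauParR G W1 W2 W2' :
    trans G W2 ATau W2' ->
    trans G (SPar W1 W2) ATau (SPar W1 W2')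
| TRec G P l W :
    trans G (SProc (psubst 0 (PFix P) P)) l W ->
    trans G (SProc (PFix P)) l W
| TSumL G P Q l W :
    (l = ATau \/ exists c v, l = ASnd c v) ->
    trans G (SProc P) l W ->
    trans G (SProc (PSum P Q)) l W
| TSumR G P Q l W :
    (l = ATau \/ exists c v, l = ASnd c v) ->
    trans G (SProc Q) l W ->
    trans G (SProc (PSum P Q)) l W
| TSumTime G P Q P' Q' :
    trans G (SProc P) ASig (SProc P') -> trans G (SProc Q) ASig (SProc Q') ->
    trans G (SProc (PSum P Q)) ASig (SProc (PSum P' Q'))
| TSumRcvL G P Q c v W :
    trans G (SProc P) (ARcv c v) W -> rcv_conf G (SProc P) c ->
    trans G (SProc (PSum P Q)) (ARcv c v) W
| TSumRcvR G P Q c v W :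
    trans G (SProc Q) (ARcv c v) W -> rcv_conf G (SProc Q) c ->
    trans G (SProc (PSum P Q)) (ARcv c v) W
| TResI G n v W w W' :
    trans (env_ext (n, v) G) W (ASnd 0 w) W' ->
    trans G (SRes n v W) ATau
      (let a := upd (ASnd 0 w) (env_ext (n, v) G) 0 in SRes (fst a) (snd a) W')
| TResV G n v W l W' :
    trans (env_ext (n, v) G) W (shift_act l) W' ->
    trans G (SRes n v W) l
      (let a := upd (shift_act l) (env_ext (n, v) G) 0 in SRes (fst a) (snd a) W').

Inductive red : env -> sys -> env -> sys -> Prop :=
| RedStep G W l W' :
    (forall c v, l <> ARcv c v) ->
    trans G W l W' ->
    red G W (upd l G) W'.

End CCCP.

Inductive wf {D : Type} : env D -> sys D -> Prop :=
| WfProc G P : closed_proc 0 0 P -> wf G (SProc P)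
| WfAct G c P : exposed G c -> closed_proc 1 0 P -> wf G (SAct c P)
| WfPar G W1 W2 : wf G W1 -> wf G W2 -> wf G (SPar W1 W2)
| WfRes G n v W : wf (env_ext (n, v) G) W -> wf G (SRes n v W).

(* Closedness is preserved by the substitutions
   performed by a step (a received closed value for the bound datum, a closed
   [fix] for its own variable), and no action ever makes an exposed channel idle
   except [sigma], which decrements the counters: an active receiver survives a
   [sigma] only while its counter exceeds 1, and becomes ordinary code when it
   reaches 1.  A receiver becomes active only on an exposed channel, or on an
   idle one that the synchronised broadcast exposes for [delta v >= 1] units. *)
From Stdlib Require Import Arith List Lia.
Set Implicit Arguments.

Section Closedness.
Variable D : Type.

Lemma exp_ind_nested (P : exp D -> Prop) :
  (forall v, P (EV v)) ->
  (forall f es, Forall P es -> P (EOp f es)) ->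
  forall e, P e.
Proof.
  intros HV HOp. fix IH 1. intros [v | f es].
  - apply HV.
  - apply HOp. revert es. fix IHes 1. intros [| e es]; constructor.
    + apply IH.
    + apply IHes.
Qed.

Lemma closed_exp_EOp dd f (es : list (exp D)) :
  closed_exp dd (EOp f es) <-> Forall (closed_exp dd) es.
Proof.
  induction es as [| e es IHes]; simpl in *.
  - split; auto.
  - rewrite IHes. split.
    + intros [He Hes]. constructor; assumption.
    + intros Hall. inversion Hall. split; assumption.
Qed.

Lemma dsubst_exp_EOp k w f (es : list (exp D)) :
  dsubst_exp k w (EOp f es) = EOp f (map (dsubst_exp k w) es).
Proof.
  induction es as [| e es IHes]; simpl in *; [reflexivity |].
  congruence.
Qed.

Lemma closed_exp_weaken dd dd' (e : exp D) :
  dd <= dd' -> closed_exp dd e -> closed_exp dd' e.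
Proof.
  intros Hle. induction e as [[x | u] | f es IHes] using exp_ind_nested.
  - simpl. lia.
  - trivial.
  - rewrite !closed_exp_EOp, !Forall_forall in *. intros Hes e He.
    apply IHes; auto.
Qed.

Lemma closed_val_dsubst dd k w (v : val D) :
  k <= dd -> closed_val (S dd) v -> closed_val dd (dsubst_val k w v).
Proof.
  intros Hk. destruct v as [x | u]; simpl; [intros Hx | trivial].
  destruct (Nat.eqb_spec x k); [exact I |].
  destruct (Nat.ltb_spec k x); simpl; lia.
Qed.

Lemma closed_exp_dsubst dd k w (e : exp D) :
  k <= dd -> closed_exp (S dd) e -> closed_exp dd (dsubst_exp k w e).
Proof.
  intros Hk. induction e as [v | f es IHes] using exp_ind_nested.
  - apply closed_val_dsubst, Hk.
  - rewrite dsubst_exp_EOp, !closed_exp_EOp, Forall_map, !Forall_forall in *.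
    intros Hes e He. apply IHes; auto.
Qed.

Lemma closed_bexp_weaken dd dd' (b : bexp D) :
  dd <= dd' -> closed_bexp dd b -> closed_bexp dd' b.
Proof.
  destruct b; simpl; [intros Hle [H1 H2]; split | trivial];
    eapply closed_exp_weaken; eassumption.
Qed.

Lemma closed_bexp_dsubst dd k w (b : bexp D) :
  k <= dd -> closed_bexp (S dd) b -> closed_bexp dd (dsubst_bexp k w b).
Proof.
  destruct b; simpl; [intros Hk [H1 H2]; split | trivial];
    apply closed_exp_dsubst; assumption.
Qed.

Lemma closed_proc_weaken (P : proc D) : forall dd pd dd' pd',
  dd <= dd' -> pd <= pd' -> closed_proc dd pd P -> closed_proc dd' pd' P.
Proof.
  induction P; intros dd pd dd' pd' Hd Hp; simpl; try tauto.
  - intros [He HP]. split; eauto using closed_exp_weaken.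
  - intros [HP HQ]. split; [apply (IHP1 (S dd) pd) | apply (IHP2 dd pd)];
      auto; lia.
  - eauto.
  - eauto.
  - intros [HP HQ]. split; eauto.
  - intros (Hb & HP & HQ). split; [| split]; eauto using closed_bexp_weaken.
  - lia.
  - apply IHP; lia.
Qed.

Lemma closed_proc_dsubst (P : proc D) : forall dd pd k w,
  k <= dd -> closed_proc (S dd) pd P -> closed_proc dd pd (dsubst k w P).
Proof.
  induction P; intros dd pd k w Hk; simpl; try tauto.
  - intros [He HP]. split; auto using closed_exp_dsubst.
  - intros [HP HQ]. split; [apply IHP1; [lia |] |]; auto.
  - auto.
  - auto.
  - intros [HP HQ]. split; auto.
  - intros (Hb & HP & HQ). split; [| split]; auto using closed_bexp_dsubst.
  - auto.
Qed.

(* [psubst] does not shift [R], so it is only meaningful for closed [R]. *)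
Lemma closed_proc_psubst (R P : proc D) : forall dd pd k,
  closed_proc 0 0 R -> k <= pd ->
  closed_proc dd (S pd) P -> closed_proc dd pd (psubst k R P).
Proof.
  induction P; intros dd pd k HR Hk; simpl; try tauto.
  - intros [He HP]. split; auto.
  - intros [HP HQ]. split; auto.
  - auto.
  - auto.
  - intros [HP HQ]. split; auto.
  - intros (Hb & HP & HQ). split; [| split]; auto.
  - intros HX. destruct (Nat.eqb_spec X k).
    + apply closed_proc_weaken with (dd := 0) (pd := 0); auto; lia.
    + destruct (Nat.ltb_spec k X); simpl; lia.
  - apply IHP; [assumption | lia].
Qed.

Lemma closed_proc_sigma_n dd pd n (P : proc D) :
  closed_proc dd pd (sigma_n n P) <-> closed_proc dd pd P.
Proof. induction n; simpl; tauto. Qed.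

End Closedness.

Section WellFormedness.
Variable D : Type.

Lemma wf_SProc_iff (G : env D) P : wf G (SProc P) <-> closed_proc 0 0 P.
Proof. split; [intros H; inversion H | constructor]; assumption. Qed.

Lemma wf_SAct_iff (G : env D) c P :
  wf G (SAct c P) <-> exposed G c /\ closed_proc 1 0 P.
Proof. split; [intros H; inversion H | intros []; constructor]; auto. Qed.

Lemma wf_SPar_iff (G : env D) W1 W2 : wf G (SPar W1 W2) <-> wf G W1 /\ wf G W2.
Proof. split; [intros H; inversion H | intros []; constructor]; auto. Qed.

Lemma wf_SRes_iff (G : env D) n v W :
  wf G (SRes n v W) <-> wf (env_ext (n, v) G) W.
Proof. split; [intros H; inversion H | constructor]; auto. Qed.

Lemma wf_exposed_mono (G : env D) W :
  wf G W -> forall G', (forall c, exposed G c -> exposed G' c) -> wf G' W.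
Proof.
  induction 1; intros G' HG; constructor; auto.
  apply IHwf. intros [| c]; unfold exposed; simpl; auto. apply HG.
Qed.

(* A restriction packs the state of its own channel (index 0 of the inner
   environment) and reads the outer environment at the shifted indices. *)
Lemma wf_SRes_of (G1 G : env D) W :
  wf G1 W -> (forall c, fst (G1 (S c)) = fst (G c)) ->
  wf G (SRes (fst (G1 0)) (snd (G1 0)) W).
Proof.
  intros HW HG. constructor. apply (wf_exposed_mono HW).
  intros [| c]; unfold exposed; simpl; [auto | rewrite HG; auto].
Qed.

Variable delta : cval D -> nat.

Lemma exposed_bcast_upd (G : env D) c v d :
  exposed G d -> exposed (bcast_upd delta c v G) d.
Proof.
  unfold exposed, bcast_upd. intros Hd.
  destruct (Nat.eqb_spec d c); [subst | assumption].
  destruct (Nat.eqb_spec (fst (G c)) 0); simpl; lia.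
Qed.

Lemma upd_shift_act_env_ext l a (G : env D) c :
  upd delta (shift_act l) (env_ext a G) (S c) = upd delta l G c.
Proof. destruct l; reflexivity. Qed.

Hypothesis delta_pos : forall v, 1 <= delta v.

Lemma exposed_bcast_upd_idle (G : env D) c v :
  idle G c -> exposed (bcast_upd delta c v G) c.
Proof.
  unfold idle, exposed, bcast_upd. intros Hc.
  rewrite Nat.eqb_refl, Hc. apply delta_pos.
Qed.

Lemma trans_wf (G : env D) W l W' :
  trans delta G W l W' -> wf G W -> wf (upd delta l G) W'.
Proof.
  induction 1; simpl; rewrite ?wf_SProc_iff, ?wf_SAct_iff, ?wf_SPar_iff in *;
    simpl; try tauto.
  - rewrite closed_proc_sigma_n. tauto.
  - intros [HP _]. split; [apply exposed_bcast_upd_idle |]; assumption.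
  - intros HW. apply (wf_exposed_mono HW), exposed_bcast_upd.
  - intros [_ HP]. unfold exposed. simpl. split; [lia | assumption].
  - intros [_ HP]. apply closed_proc_dsubst; [lia | assumption].
  - intros [HP _]. split; [assumption |].
    apply closed_proc_weaken with (dd := 0) (pd := 0);
      auto using closed_proc_dsubst.
  - intros HP. apply IHtrans, closed_proc_psubst; auto.
  - rewrite wf_SRes_iff. intros HW.
    eapply wf_SRes_of; [exact (IHtrans HW) | reflexivity].
  - rewrite wf_SRes_iff. intros HW.
    eapply wf_SRes_of; [exact (IHtrans HW) |].
    intros c. rewrite upd_shift_act_env_ext. reflexivity.
Qed.

End WellFormedness.

Theorem mainTheorem10 (D : Type) (delta : cval D -> nat)
  (Hdelta : forall v, 1 <= delta v)
  (G : env D) (W : sys D) (G' : env D) (W' : sys D) :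
  wf G W -> red delta G W G' W' -> wf G' W'.
Proof.
  intros HW Hred. destruct Hred as [G W l W' _ Hstep].
  exact (trans_wf Hdelta Hstep HW).
Qed.
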